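(* Let $s>0$, $\gamma\ge0$, $u>0$, and $\nu_0,\nu_1\ge0$ with $\nu_0+\nu_1=1$. Let $(a_t)_{t\ge0}$ be the embedded ASG process, and let $y(\cdot;y_0)$ solve $$\dot y=-y(1-y)[s+\gamma(1-y)]+u\nu_1(1-y)-u\nu_0y,\qquad y(0)=y_0\in[0,1].$$ Then for all $\alpha\in\Xi^\star$, $t\ge0$ and $y_0\in[0,1]$, $$H\big(\alpha,y(t;y_0)\big)=\mathbb E_\alpha\big[H(a_t,y_0)\big].$$ In particular, if the process starts from the tree consisting only of an unmarked root, then $y(t;y_0)=\mathbb E\big[H(a_t,y_0)\big]$.
   Context: $\Xi^\star$ is the set of finite rooted trees with the following properties: every vertex has outdegree at most 3; the children of a vertex of outdegree 2 are labelled left and right, and those of a vertex of outdegree 3 are labelled left, middle and right; every vertex of outdegree 1 carries a mark, either $\times$ or $\circ$; no other vertex carries a mark. The embedded ASG process $(a_t)_{t\ge0}$ is the continuous-time Markov chain on $\Xi^\star$ in which, independently for each leaf $\ell$ of the current tree: - at rate $s$, two children (left, right) are attached to $\ell$; - at rate $\gamma$, three children (left, middle, right) are attached to $\ell$; - at rate $u\nu_1$, one child is attached to $\ell$ and $\ell$ is marked $\times$; - at rate $u\nu_0$, one child is attached to $\ell$ and $\ell$ is marked $\circ$. $\mathbb E_\alpha$ denotes expectation when $a_0=\alpha$. For $\alpha\in\Xi^\star$ and $z\in[0,1]$, $H(\alpha,z)$ is the probability that the root of $\alpha$ gets type 1 (''unfit''). Types are obtained as follows. Each leaf independently gets type 1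 with probability $z$ and type 0 otherwise. Types then propagate to the root: a vertex marked $\times$ (resp. $\circ$) has type 1 (resp. 0); a vertex of outdegree 2 has type 1 iff both children have type 1; a vertex of outdegree 3 has type 0 iff its left child has type 0 or both its middle and right children have type 0. *)

From Stdlib Require Import Reals List.
From Coquelicot Require Import Coquelicot.
Import ListNotations.
Open Scope R_scope.

(* The set Xi^* of finite rooted trees: every vertex has outdegree 0,1,2 or 3;
   children of outdegree-2/3 vertices are ordered (left, [middle,] right);
   outdegree-1 vertices carry a mark (true = ×, false = ∘); no other marks. *)
Inductive tree : Type :=
  | Leaf : tree
  | Mark : bool -> tree -> tree
  | Bin  : tree -> tree -> tree
  | Ter  : tree -> tree -> tree -> tree.

(* H(alpha, z): probability that the root gets type 1, when leaves get type 1
   independently with probability z and types propagate to the root. *)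
Fixpoint H (a : tree) (z : R) : R :=
  match a with
  | Leaf => z
  | Mark true _ => 1
  | Mark false _ => 0
  | Bin l r => H l z * H r z
  | Ter l m r => H l z * (1 - (1 - H m z) * (1 - H r z))
  end.

(* Transitions of the embedded ASG process out of a tree: list of (rate, new tree),
   one group of four entries per leaf. *)
Fixpoint succ (s g u nu0 nu1 : R) (a : tree) : list (R * tree) :=
  match a with
  | Leaf => [(s, Bin Leaf Leaf); (g, Ter Leaf Leaf Leaf);
             (u * nu1, Mark true Leaf); (u * nu0, Mark false Leaf)]
  | Mark b c => map (fun p => (fst p, Mark b (snd p))) (succ s g u nu0 nu1 c)
  | Bin l r => map (fun p => (fst p, Bin (snd p) r)) (succ s g u nu0 nu1 l)
            ++ map (fun p => (fst p, Bin l (snd p))) (succ s g u nu0 nu1 r)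
  | Ter l m r => map (fun p => (fst p, Ter (snd p) m r)) (succ s g u nu0 nu1 l)
            ++ map (fun p => (fst p, Ter l (snd p) r)) (succ s g u nu0 nu1 m)
            ++ map (fun p => (fst p, Ter l m (snd p))) (succ s g u nu0 nu1 r)
  end.

Definition rate_sum (l : list (R * tree)) (f : tree -> R) : R :=
  fold_right (fun p acc => fst p * f (snd p) + acc) 0 l.

Definition total_rate (s g u nu0 nu1 : R) (a : tree) : R :=
  rate_sum (succ s g u nu0 nu1 a) (fun _ => 1).

(* Backward integral-equation iteration (Norris, Markov Chains, Thm 2.8.3/2.8.4):
   Tn n t a = E_a[ f(a_t) ; at most n jumps in [0,t] ]  (for f >= 0). *)
Fixpoint Tn (s g u nu0 nu1 : R) (f : tree -> R) (n : nat) (t : R) (a : tree) : R :=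
  let lam := total_rate s g u nu0 nu1 a in
  match n with
  | O => exp (- lam * t) * f a
  | S n' => exp (- lam * t) * f a
      + RInt (fun r => exp (- lam * r) *
                rate_sum (succ s g u nu0 nu1 a) (fun b => Tn s g u nu0 nu1 f n' (t - r) b))
             0 t
  end.

(* E_a[ f(a_t) ] for the (minimal) continuous-time Markov chain with the above rates:
   the increasing limit of Tn as n -> oo. *)
Definition ASG_expect (s g u nu0 nu1 : R) (a : tree) (t : R) (f : tree -> R) : R :=
  real (Lim_seq (fun n => Tn s g u nu0 nu1 f n t a)).

Definition ode_rhs (s g u nu0 nu1 : R) (y : R) : R :=
  - y * (1 - y) * (s + g * (1 - y)) + u * nu1 * (1 - y) - u * nu0 * y.

(* Put G t a := H a (y t).  Because H is built leaf by leaf from affine maps, differentiating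
   along the ODE gives d/dt G t a = sum over the transitions (q, b) out of a of q (G t b - G t a):
   G solves the backward equation of the ASG chain, and it is bounded since the ODE keeps y in
   [0, 1].  Duhamel's formula turns this into the first-jump integral equation
   G t = e^(-lam t) G 0 + first_jump G t, whose iterates starting from e^(-lam t) G 0 are the Tn
   defining ASG_expect.  The gaps G - Tn are nonnegative and nonincreasing in n, and their partial
   sums are bounded by 2 nleaves(a) e^(3 c t), because the exit rate c nleaves(a) is linear in the
   number of leaves, which grows by at most 2 per jump; hence the gaps are O(1/n). *)

From Pilot Require Import Defs.
From Stdlib Require Import Reals Lra Psatz List.
From Coquelicot Require Import Coquelicot.
Open Scope R_scope.

(** * Calculus on the real line *)

Lemma is_derive_replace (f : R -> R) (x l l' : R) : is_derive f x l -> l = l' -> is_derive f x l'.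
Proof. intros D E. subst. exact D. Qed.

Lemma is_derive_Rmult (f1 f2 : R -> R) x d1 d2 :
  is_derive f1 x d1 -> is_derive f2 x d2 ->
  is_derive (fun t => f1 t * f2 t) x (d1 * f2 x + f1 x * d2).
Proof. intros D1 D2. exact (is_derive_mult f1 f2 x d1 d2 D1 D2 Rmult_comm). Qed.

Lemma is_derive_one_minus (f : R -> R) x d :
  is_derive f x d -> is_derive (fun t => 1 - f t) x (- d).
Proof.
  intro D. eapply is_derive_replace; [apply (is_derive_minus (fun _ => 1) f x zero d)|].
  - apply is_derive_const.
  - exact D.
  - unfold minus, plus, opp, zero; simpl. ring.
Qed.

Lemma continuous_exp_scal (k x : R) : continuous (fun t => exp (k * t)) x.
Proof. apply (@ex_derive_continuous R_AbsRing R_NormedModule). auto_derive. exact I. Qed.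

Lemma le_of_derive_nonneg (f df : R -> R) a b :
  a <= b -> (forall x, a <= x <= b -> continuous f x) ->
  (forall x, a < x < b -> is_derive f x (df x) /\ 0 <= df x) -> f a <= f b.
Proof.
  intros Hab Cf Df.
  (* [MVT_gen] may return an endpoint, where [df] is unconstrained; [Rmax 0 df] agrees with
     [df] inside. *)
  destruct (MVT_gen f a b (fun x => Rmax 0 (df x))) as [c [_ E]]; cbv zeta in *.
  - rewrite Rmin_left, Rmax_right by lra. intros x Hx.
    destruct (Df x Hx) as [D Pos]. rewrite Rmax_right by exact Pos. exact D.
  - rewrite Rmin_left, Rmax_right by lra. intros x Hx.
    apply continuity_pt_filterlim, Cf, Hx.
  - pose proof (Rmax_l 0 (df c)). nra.
Qed.

Lemma continuous_locally_lt (f : R -> R) x r :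
  continuous f x -> f x < r -> locally x (fun y => f y < r).
Proof.
  intros Cf Hr. apply (Cf (fun z => z < r)). exists (mkposreal (r - f x) ltac:(lra)).
  intros z Hz. change (Rabs (z - f x) < r - f x) in Hz. apply Rabs_def2 in Hz. lra.
Qed.

Lemma continuous_locally_gt (f : R -> R) x r :
  continuous f x -> r < f x -> locally x (fun y => r < f y).
Proof.
  intros Cf Hr. apply (Cf (fun z => r < z)). exists (mkposreal (f x - r) ltac:(lra)).
  intros z Hz. change (Rabs (z - f x) < f x - r) in Hz. apply Rabs_def2 in Hz. lra.
Qed.

Lemma last_nonpos (w : R -> R) a b :
  (forall x, continuous w x) -> a <= b -> w a <= 0 -> 0 < w b ->
  exists c, a <= c < b /\ w c <= 0 /\ (forall x, c < x <= b -> 0 < w x).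
Proof.
  intros Cw Hab Ha Hb.
  set (E := fun x => a <= x <= b /\ w x <= 0).
  destruct (completeness E) as [c [Hub Hlub]].
  { exists b. intros x [Hx _]. lra. }
  { exists a. split; [lra|exact Ha]. }
  assert (Hac : a <= c) by (apply Hub; split; [lra|exact Ha]).
  assert (Hcb : c <= b) by (apply Hlub; intros x [Hx _]; lra).
  assert (After : forall x, c < x <= b -> 0 < w x).
  { intros x Hx. destruct (Rlt_or_le 0 (w x)) as [|Hw]; [assumption|].
    assert (x <= c) by (apply Hub; split; [lra|exact Hw]). lra. }
  assert (Hc : w c <= 0).
  { destruct (Rle_or_lt (w c) 0) as [|Hw]; [assumption|exfalso].
    destruct (continuous_locally_gt w c 0 (Cw c) Hw) as [eps Heps].
    assert (c <= c - eps); [|pose proof (cond_pos eps); lra].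
    apply Hlub. intros x [Hx Hwx].
    destruct (Rle_or_lt x (c - eps)) as [|Hlt]; [assumption|exfalso].
    assert (x <= c) by (apply Hub; split; assumption).
    enough (0 < w x) by lra. apply Heps.
    change (Rabs (x - c) < eps). rewrite Rabs_left1 by lra. lra. }
  exists c. split; [|split; assumption].
  split; [exact Hac|]. destruct (Req_dec c b) as [->|]; lra.
Qed.

Lemma nonpos_of_linear_growth (w dw : R -> R) (K : R) :
  (forall x, continuous w x) -> w 0 <= 0 ->
  (forall x, 0 < x -> is_derive w x (dw x)) ->
  (forall x, 0 < x -> 0 < w x <= 1 -> dw x <= K * w x) ->
  forall t, 0 <= t -> w t <= 0.
Proof.
  intros Cw W0 Dw Growth t Ht.
  destruct (Rle_or_lt (w t) 0) as [|Hwt]; [assumption|exfalso].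
  destruct (last_nonpos w 0 t Cw Ht W0 Hwt) as [c [Hc [Hwc After]]].
  destruct (continuous_locally_lt w c 1 (Cw c) ltac:(lra)) as [eps Heps].
  pose proof (cond_pos eps) as Heps0.
  set (t' := Rmin t (c + eps / 2)).
  assert (Ht' : c < t' <= t) by (split; [apply Rmin_glb_lt; lra|apply Rmin_l]).
  assert (Ht'eps : t' <= c + eps / 2) by apply Rmin_r.
  assert (In01 : forall x, c < x <= t' -> 0 < w x <= 1).
  { intros x Hx. split; [apply After; lra|].
    apply Rlt_le, Heps. change (Rabs (x - c) < eps).
    rewrite Rabs_right; lra. }
  set (phi := fun x => exp (- K * x) * - w x).
  assert (Mono : phi c <= phi t').
  { apply (le_of_derive_nonneg phi (fun x => exp (- K * x) * (K * w x - dw x))); [lra| |].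
    - intros x _. apply (continuous_mult (fun x => exp (- K * x)) (fun x => - w x)).
      + apply continuous_exp_scal.
      + apply (continuous_opp w), Cw.
    - intros x Hx. split.
      + eapply is_derive_replace.
        * apply (is_derive_Rmult (fun x => exp (- K * x)) (fun x => - w x)).
          -- auto_derive; [exact I|reflexivity].
          -- apply (is_derive_opp w), Dw. lra.
        * change (opp (dw x)) with (- dw x). ring.
      + apply Rmult_le_pos; [apply Rlt_le, exp_pos|].
        specialize (Growth x ltac:(lra) (In01 x ltac:(lra))). lra. }
  unfold phi in Mono. pose proof (exp_pos (- K * c)). pose proof (exp_pos (- K * t')).
  specialize (In01 t' ltac:(lra)). nra.
Qed.

Lemma is_lim_seq_0_of_bounded_partial_sums (w : nat -> R) (M : R) :
  (forall n, 0 <= w n) -> (forall n, w (S n) <= w n) -> (forall n, sum_f_R0 w n <= M) ->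
  is_lim_seq w 0.
Proof.
  intros Pos Decr Sum.
  assert (Avg : forall n, INR (S n) * w n <= sum_f_R0 w n).
  { induction n as [|n IH]; [simpl; lra|].
    change (sum_f_R0 w (S n)) with (sum_f_R0 w n + w (S n)).
    rewrite (S_INR (S n)). specialize (Decr n). pose proof (pos_INR (S n)). nra. }
  apply is_lim_seq_le_le with (u := fun _ => 0) (w := fun n => M * / INR (S n)).
  - intro n. split; [apply Pos|].
    pose proof (lt_0_INR (S n) ltac:(lia)).
    apply Rmult_le_reg_l with (INR (S n)); [assumption|].
    rewrite <- Rmult_assoc, (Rmult_comm _ M), Rmult_assoc, Rinv_r, Rmult_1_r by lra.
    specialize (Avg n). specialize (Sum n). lra.
  - apply is_lim_seq_const.
  - replace (Finite 0) with (Rbar_mult M 0) by (simpl; f_equal; ring).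
    apply is_lim_seq_scal_l. replace (Finite 0) with (Rbar_inv p_infty) by reflexivity.
    apply is_lim_seq_inv; [|discriminate].
    apply (is_lim_seq_incr_1 INR), is_lim_seq_INR.
Qed.

Lemma rate_sum_app l1 l2 f : rate_sum (l1 ++ l2) f = rate_sum l1 f + rate_sum l2 f.
Proof. induction l1 as [|p l IH]; unfold rate_sum in *; simpl; [ring|]. rewrite IH. ring. Qed.

Lemma rate_sum_map (C : tree -> tree) l f :
  rate_sum (map (fun p => (fst p, C (snd p))) l) f = rate_sum l (fun b => f (C b)).
Proof. induction l as [|p l IH]; unfold rate_sum in *; simpl; [ring|]. rewrite IH. ring. Qed.

Lemma rate_sum_ext l f1 f2 : (forall b, f1 b = f2 b) -> rate_sum l f1 = rate_sum l f2.
Proof.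
  intro E. induction l as [|p l IH]; unfold rate_sum in *; simpl; [ring|]. rewrite IH, E. ring.
Qed.

Lemma rate_sum_plus l f1 f2 :
  rate_sum l (fun b => f1 b + f2 b) = rate_sum l f1 + rate_sum l f2.
Proof. induction l as [|p l IH]; unfold rate_sum in *; simpl; [ring|]. rewrite IH. ring. Qed.

Lemma rate_sum_minus l f1 f2 :
  rate_sum l (fun b => f1 b - f2 b) = rate_sum l f1 - rate_sum l f2.
Proof. induction l as [|p l IH]; unfold rate_sum in *; simpl; [ring|]. rewrite IH. ring. Qed.

Lemma rate_sum_scal l k f : rate_sum l (fun b => k * f b) = k * rate_sum l f.
Proof. induction l as [|p l IH]; unfold rate_sum in *; simpl; [ring|]. rewrite IH. ring. Qed.

Lemma rate_sum_scal_ext l k f1 f2 :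
  (forall b, f1 b = k * f2 b) -> rate_sum l f1 = k * rate_sum l f2.
Proof. intro E. rewrite <- rate_sum_scal. apply rate_sum_ext, E. Qed.

Lemma rate_sum_const l k : rate_sum l (fun _ => k) = k * rate_sum l (fun _ => 1).
Proof. rewrite <- rate_sum_scal. apply rate_sum_ext. intro; ring. Qed.

Lemma rate_sum_le l f1 f2 :
  List.Forall (fun p => 0 <= fst p /\ f1 (snd p) <= f2 (snd p)) l ->
  rate_sum l f1 <= rate_sum l f2.
Proof.
  intro F. induction F as [|[q b] l [Hq Hf] _ IH]; unfold rate_sum in *; simpl in *; [lra|].
  apply Rplus_le_compat; [apply Rmult_le_compat_l|]; assumption.
Qed.

Lemma rate_sum_le_pointwise l f1 f2 :
  List.Forall (fun p => 0 <= fst p) l -> (forall b, f1 b <= f2 b) ->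
  rate_sum l f1 <= rate_sum l f2.
Proof.
  intros Pos Le. apply rate_sum_le. eapply Forall_impl; [|exact Pos]. intros p Hp. auto.
Qed.

Definition exit_rate (sc : tree -> list (R * tree)) (a : tree) : R :=
  rate_sum (sc a) (fun _ => 1).

Fixpoint nleaves (a : tree) : R :=
  match a with
  | Leaf => 1
  | Mark _ c => nleaves c
  | Bin l r => nleaves l + nleaves r
  | Ter l m r => nleaves l + nleaves m + nleaves r
  end.

Lemma nleaves_ge1 a : 1 <= nleaves a.
Proof. induction a; simpl; lra. Qed.

Section Succ.
Variables s g u nu0 nu1 : R.

Lemma rate_sum_succ_Mark m c f :
  rate_sum (succ s g u nu0 nu1 (Mark m c)) f
  = rate_sum (succ s g u nu0 nu1 c) (fun b => f (Mark m b)).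
Proof. simpl. apply (rate_sum_map (fun b => Mark m b)). Qed.

Lemma rate_sum_succ_Bin l r f :
  rate_sum (succ s g u nu0 nu1 (Bin l r)) f
  = rate_sum (succ s g u nu0 nu1 l) (fun b => f (Bin b r))
    + rate_sum (succ s g u nu0 nu1 r) (fun b => f (Bin l b)).
Proof.
  simpl. rewrite rate_sum_app, (rate_sum_map (fun b => Bin b r)).
  rewrite (rate_sum_map (fun b => Bin l b)). reflexivity.
Qed.

Lemma rate_sum_succ_Ter l m r f :
  rate_sum (succ s g u nu0 nu1 (Ter l m r)) f
  = rate_sum (succ s g u nu0 nu1 l) (fun b => f (Ter b m r))
    + rate_sum (succ s g u nu0 nu1 m) (fun b => f (Ter l b r))
    + rate_sum (succ s g u nu0 nu1 r) (fun b => f (Ter l m b)).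
Proof.
  simpl. rewrite !rate_sum_app, (rate_sum_map (fun b => Ter b m r)),
    (rate_sum_map (fun b => Ter l b r)), (rate_sum_map (fun b => Ter l m b)).
  ring.
Qed.

Lemma exit_rate_succ a :
  exit_rate (succ s g u nu0 nu1) a = (s + g + u * nu1 + u * nu0) * nleaves a.
Proof.
  unfold exit_rate. induction a; simpl nleaves;
    rewrite ?rate_sum_succ_Mark, ?rate_sum_succ_Bin, ?rate_sum_succ_Ter.
  - unfold rate_sum; simpl; ring.
  - exact IHa.
  - rewrite IHa1, IHa2. ring.
  - rewrite IHa1, IHa2, IHa3. ring.
Qed.

Lemma succ_rates_nonneg a : 0 <= s -> 0 <= g -> 0 <= u -> 0 <= nu0 -> 0 <= nu1 ->
  List.Forall (fun p => 0 <= fst p) (succ s g u nu0 nu1 a).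
Proof.
  intros Hs Hg Hu H0 H1.
  induction a; simpl; rewrite ?Forall_app, ?Forall_map; auto.
  repeat (apply Forall_cons; [simpl; nra|]). apply Forall_nil.
Qed.

Lemma succ_nleaves_le a :
  List.Forall (fun p => nleaves (snd p) <= nleaves a + 2) (succ s g u nu0 nu1 a).
Proof.
  induction a; simpl; rewrite ?Forall_app, ?Forall_map.
  - repeat (apply Forall_cons; [simpl; lra|]). apply Forall_nil.
  - exact IHa.
  - split; eapply Forall_impl; try eassumption; simpl; intros; lra.
  - repeat split; eapply Forall_impl; try eassumption; simpl; intros; lra.
Qed.

Lemma is_derive_H_along_ode (z : R -> R) x a :
  is_derive z x (ode_rhs s g u nu0 nu1 (z x)) ->
  is_derive (fun t => H a (z t)) x
    (rate_sum (succ s g u nu0 nu1 a) (fun b => H b (z x) - H a (z x))).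
Proof.
  intro Dz.
  induction a as [|m c _|l IHl r IHr|l IHl m IHm r IHr].
  - eapply is_derive_replace; [exact Dz|]. unfold rate_sum, ode_rhs; simpl. ring.
  - rewrite rate_sum_succ_Mark.
    rewrite (rate_sum_scal_ext _ 0 _ (fun b => H b (z x) - H c (z x)))
      by (intro; destruct m; simpl; ring).
    apply (is_derive_ext (fun _ => H (Mark m c) (z x))); [intro; destruct m; reflexivity|].
    eapply is_derive_replace; [apply is_derive_const|]. apply eq_sym, Rmult_0_l.
  - rewrite rate_sum_succ_Bin.
    rewrite (rate_sum_scal_ext _ (H r (z x)) _ (fun b => H b (z x) - H l (z x)))
      by (intro; simpl; ring).
    rewrite (rate_sum_scal_ext (succ s g u nu0 nu1 r) (H l (z x)) _
               (fun b => H b (z x) - H r (z x)))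
      by (intro; simpl; ring).
    eapply is_derive_replace; [exact (is_derive_Rmult _ _ x _ _ IHl IHr)|]. cbv beta. ring.
  - rewrite rate_sum_succ_Ter.
    rewrite (rate_sum_scal_ext _ (1 - (1 - H m (z x)) * (1 - H r (z x))) _
               (fun b => H b (z x) - H l (z x))) by (intro; simpl; ring).
    rewrite (rate_sum_scal_ext (succ s g u nu0 nu1 m) (H l (z x) * (1 - H r (z x))) _
               (fun b => H b (z x) - H m (z x))) by (intro; simpl; ring).
    rewrite (rate_sum_scal_ext (succ s g u nu0 nu1 r) (H l (z x) * (1 - H m (z x))) _
               (fun b => H b (z x) - H r (z x))) by (intro; simpl; ring).
    pose proof (is_derive_one_minus _ _ _
                  (is_derive_Rmult _ _ x _ _ (is_derive_one_minus _ _ _ IHm)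
                     (is_derive_one_minus _ _ _ IHr))) as Dmr.
    eapply is_derive_replace; [exact (is_derive_Rmult _ _ x _ _ IHl Dmr)|]. cbv beta. ring.
Qed.

End Succ.

Lemma H_unit_interval a z : 0 <= z <= 1 -> 0 <= H a z <= 1.
Proof.
  intro Hz. induction a as [|[|] c _|l IHl r IHr|l IHl m IHm r IHr]; simpl; try lra.
  - split; nra.
  - assert (0 <= (1 - H m z) * (1 - H r z) <= 1) by (split; nra). split; nra.
Qed.

Lemma H_continuous a z : continuous (H a) z.
Proof.
  induction a as [|[|] c _|l IHl r IHr|l IHl m IHm r IHr].
  - apply continuous_id.
  - apply continuous_const.
  - apply continuous_const.
  - apply (continuous_mult (H l) (H r)); assumption.
  - apply (continuous_mult (H l) (fun z => 1 - (1 - H m z) * (1 - H r z))); [assumption|].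
    apply (continuous_minus (fun _ => 1)); [apply continuous_const|].
    apply (continuous_mult (fun z => 1 - H m z) (fun z => 1 - H r z));
      apply (continuous_minus (fun _ => 1)); auto using continuous_const.
Qed.

(** * The ODE keeps its solutions in the unit interval *)

(* [y] is only known to be right-continuous at 0, while the integration lemmas below want
   continuity on all of R. *)
Definition extend_const (y : R -> R) (y0 : R) (x : R) : R :=
  if Rle_dec x 0 then y0 else y x.

Lemma extend_const_nonneg (y : R -> R) y0 x : y 0 = y0 -> 0 <= x -> extend_const y y0 x = y x.
Proof.
  intros Y0 Hx. unfold extend_const. destruct (Rle_dec x 0); [|reflexivity].
  replace x with 0 by lra. now rewrite Y0.
Qed.

Lemma extend_const_locally (y : R -> R) y0 x :
  0 < x -> locally x (fun z => y z = extend_const y y0 z).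
Proof.
  intro Hx. exists (mkposreal x Hx). intros z Hz. change (Rabs (z - x) < x) in Hz.
  apply Rabs_def2 in Hz. unfold extend_const. destruct (Rle_dec z 0); [lra|reflexivity].
Qed.

Lemma extend_const_continuous (y : R -> R) y0 :
  filterlim y (at_right 0) (locally y0) -> (forall x, 0 < x -> continuous y x) ->
  forall x, continuous (extend_const y y0) x.
Proof.
  intros Right Cy x.
  destruct (Rlt_or_le 0 x) as [Hx|Hx]; [|destruct (Rlt_or_le x 0) as [Hx'|Hx']].
  - apply (continuous_ext_loc _ y); [apply extend_const_locally, Hx|apply Cy, Hx].
  - apply (continuous_ext_loc _ (fun _ => y0)); [|apply continuous_const].
    exists (mkposreal (- x) ltac:(lra)). intros z Hz. change (Rabs (z - x) < - x) in Hz.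
    apply Rabs_def2 in Hz. unfold extend_const. destruct (Rle_dec z 0); [reflexivity|lra].
  - replace x with 0 by lra.
    assert (E0 : extend_const y y0 0 = y0).
    { unfold extend_const. destruct (Rle_dec 0 0); [reflexivity|lra]. }
    unfold continuous. rewrite E0. intros P HP.
    destruct (Right P HP) as [eps Heps]. exists eps. intros z Hz.
    unfold extend_const. destruct (Rle_dec z 0) as [|Hz0].
    + now apply locally_singleton.
    + apply Heps; [exact Hz|lra].
Qed.

Section Ode.
Variables s g u nu0 nu1 : R.
Hypotheses (Hs : 0 <= s) (Hg : 0 <= g) (Hu : 0 <= u) (H0 : 0 <= nu0) (H1 : 0 <= nu1).

Lemma ode_rhs_nonneg_of_nonpos v : v <= 0 -> 0 <= ode_rhs s g u nu0 nu1 v.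
Proof.
  intro Hv. unfold ode_rhs.
  assert (0 <= - v * (1 - v) * (s + g * (1 - v))) by (apply Rmult_le_pos; nra).
  assert (0 <= u * nu1 * (1 - v)) by (apply Rmult_le_pos; nra).
  assert (0 <= u * nu0 * - v) by (apply Rmult_le_pos; nra).
  nra.
Qed.

Lemma ode_rhs_above_one v : 0 <= v <= 1 -> ode_rhs s g u nu0 nu1 (1 + v) <= 2 * s * v.
Proof.
  intro Hv. unfold ode_rhs.
  assert (0 <= g * (v * v) * (1 + v)) by (apply Rmult_le_pos; nra).
  assert (0 <= u * nu0 * (1 + v)) by (apply Rmult_le_pos; nra).
  assert (0 <= u * nu1 * v) by (apply Rmult_le_pos; nra).
  assert (0 <= s * v * (1 - v)) by (apply Rmult_le_pos; nra).
  nra.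
Qed.

Lemma ode_solution_unit_interval (v : R -> R) :
  (forall x, continuous v x) -> 0 <= v 0 <= 1 ->
  (forall x, 0 < x -> is_derive v x (ode_rhs s g u nu0 nu1 (v x))) ->
  forall t, 0 <= t -> 0 <= v t <= 1.
Proof.
  intros Cv V0 Dv t Ht. split.
  - enough (- v t <= 0) by lra.
    apply (nonpos_of_linear_growth (fun x => - v x)
             (fun x => - ode_rhs s g u nu0 nu1 (v x)) 0);
      [| |intros x Hx; apply (is_derive_opp v), Dv, Hx| |exact Ht].
    + intro x. apply (continuous_opp v), Cv.
    + lra.
    + intros x _ Hx. pose proof (ode_rhs_nonneg_of_nonpos (v x) ltac:(lra)). lra.
  - (* Above 1 the field may point outwards (e.g. nu0 = 0 < u < s), so only its linear
       growth is available there. *)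
    enough (v t - 1 <= 0) by lra.
    apply (nonpos_of_linear_growth (fun x => v x - 1)
             (fun x => ode_rhs s g u nu0 nu1 (v x)) (2 * s));
      [| |intros x Hx| |exact Ht].
    + intro x. apply (continuous_minus v (fun _ => 1)); [apply Cv|apply continuous_const].
    + lra.
    + eapply is_derive_replace.
      * apply (is_derive_minus v (fun _ => 1)); [apply Dv, Hx|apply is_derive_const].
      * change (ode_rhs s g u nu0 nu1 (v x) - 0 = ode_rhs s g u nu0 nu1 (v x)). ring.
    + intros x _ Hx. pose proof (ode_rhs_above_one (v x - 1) ltac:(lra)) as Above.
      now replace (1 + (v x - 1)) with (v x) in Above by ring.
Qed.

End Ode.

(** * The first-jump operator and Duhamel's formula *)

Definition cont_in_time (U : R -> tree -> R) : Prop :=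
  forall b x, continuous (fun t => U t b) x.

(* [first_jump sc U t a] is E_a[U (t - J) X_J; J <= t], with J the first jump time of the chain
   with transitions [sc] and X_J its state after the jump; [Tn] iterates
   U |-> exp (- lam t) f + first_jump U. *)
Definition first_jump (sc : tree -> list (R * tree)) (U : R -> tree -> R) (t : R) (a : tree) : R :=
  RInt (fun r => exp (- exit_rate sc a * r) * rate_sum (sc a) (U (t - r))) 0 t.

Definition weighted_jumps (sc : tree -> list (R * tree)) (U : R -> tree -> R) (a : tree) (x : R)
  : R :=
  exp (exit_rate sc a * x) * rate_sum (sc a) (U x).

Section FirstJump.
Variable sc : tree -> list (R * tree).
Hypothesis rates_nonneg : forall a, List.Forall (fun p => 0 <= fst p) (sc a).

Lemma continuous_rate_sum l U x : cont_in_time U -> continuous (fun t => rate_sum l (U t)) x.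
Proof.
  intro CU. induction l as [|p l IH]; unfold rate_sum in *; simpl.
  - apply continuous_const.
  - apply (continuous_plus (fun t => fst p * U t (snd p))); [|exact IH].
    apply (continuous_mult (fun _ => fst p)); [apply continuous_const|apply CU].
Qed.

Lemma first_jump_integrable U a t lo hi : cont_in_time U ->
  ex_RInt (fun r => exp (- exit_rate sc a * r) * rate_sum (sc a) (U (t - r))) lo hi.
Proof.
  intro CU. apply (@ex_RInt_continuous R_CompleteNormedModule). intros r _.
  apply (continuous_mult (fun r => exp (- exit_rate sc a * r))); [apply continuous_exp_scal|].
  apply (continuous_comp (fun r => t - r) (fun x => rate_sum (sc a) (U x))).
  - apply (continuous_minus (fun _ => t) (fun r => r));
      [apply continuous_const|apply continuous_id].
  - apply continuous_rate_sum, CU.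
Qed.

Lemma first_jump_at0 U a : first_jump sc U 0 a = 0.
Proof. unfold first_jump. rewrite RInt_point. reflexivity. Qed.

Lemma first_jump_ext U V t a : 0 <= t ->
  (forall x, 0 <= x <= t -> forall b, U x b = V x b) ->
  first_jump sc U t a = first_jump sc V t a.
Proof.
  intros Ht E. apply RInt_ext. intros r Hr.
  rewrite Rmin_left, Rmax_right in Hr by lra.
  f_equal. apply rate_sum_ext. intro b. apply E. lra.
Qed.

Lemma first_jump_plus U V t a : cont_in_time U -> cont_in_time V ->
  first_jump sc (fun x b => U x b + V x b) t a
  = first_jump sc U t a + first_jump sc V t a.
Proof.
  intros CU CV. unfold first_jump.
  rewrite <- (@RInt_plus R_CompleteNormedModule) by (apply first_jump_integrable; assumption).
  apply RInt_ext. intros r _. rewrite rate_sum_plus. unfold plus; simpl. ring.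
Qed.

Lemma first_jump_minus U V t a : cont_in_time U -> cont_in_time V ->
  first_jump sc (fun x b => U x b - V x b) t a
  = first_jump sc U t a - first_jump sc V t a.
Proof.
  intros CU CV. unfold first_jump.
  rewrite <- (@RInt_minus R_CompleteNormedModule) by (apply first_jump_integrable; assumption).
  apply RInt_ext. intros r _. rewrite rate_sum_minus. unfold minus, plus, opp; simpl. ring.
Qed.

Lemma first_jump_le U V t a : 0 <= t -> cont_in_time U -> cont_in_time V ->
  (forall x, 0 <= x <= t -> forall b, U x b <= V x b) ->
  first_jump sc U t a <= first_jump sc V t a.
Proof.
  intros Ht CU CV Le. apply RInt_le; [exact Ht|apply first_jump_integrable, CU|
                                      apply first_jump_integrable, CV|].
  intros r Hr. apply Rmult_le_compat_l; [apply Rlt_le, exp_pos|].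
  apply rate_sum_le_pointwise; [apply rates_nonneg|]. intro b. apply Le. lra.
Qed.

Lemma first_jump_nonneg U t a : 0 <= t -> cont_in_time U ->
  (forall x, 0 <= x <= t -> forall b, 0 <= U x b) -> 0 <= first_jump sc U t a.
Proof.
  intros Ht CU Pos. apply RInt_ge_0; [exact Ht|apply first_jump_integrable, CU|].
  intros r Hr. apply Rmult_le_pos; [apply Rlt_le, exp_pos|].
  rewrite <- (Rmult_0_l (rate_sum (sc a) (fun _ => 1))), <- rate_sum_const.
  apply rate_sum_le_pointwise; [apply rates_nonneg|]. intro b. apply Pos. lra.
Qed.

Lemma weighted_jumps_continuous U a x : cont_in_time U -> continuous (weighted_jumps sc U a) x.
Proof.
  intro CU. apply (continuous_mult (fun x => exp (exit_rate sc a * x))).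
  - apply continuous_exp_scal.
  - apply continuous_rate_sum, CU.
Qed.

Lemma is_RInt_weighted_jumps U a lo hi : cont_in_time U ->
  is_RInt (weighted_jumps sc U a) lo hi (RInt (weighted_jumps sc U a) lo hi).
Proof.
  intro CU. apply (@RInt_correct R_CompleteNormedModule).
  apply (@ex_RInt_continuous R_CompleteNormedModule). intros x _.
  apply weighted_jumps_continuous, CU.
Qed.

Lemma first_jump_alt U t a : cont_in_time U ->
  first_jump sc U t a = exp (- exit_rate sc a * t) * RInt (weighted_jumps sc U a) 0 t.
Proof.
  intro CU. set (lam := exit_rate sc a). set (j := weighted_jumps sc U a).
  pose proof (is_RInt_weighted_jumps U a 0 t CU) as Ij. fold j in Ij.
  apply is_RInt_swap in Ij.
  replace t with (-1 * 0 + t) in Ij at 1 by ring.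
  replace 0 with (-1 * t + t) in Ij at 2 by ring.
  apply (is_RInt_comp_lin j (-1) t 0 t), (is_RInt_scal _ _ _ (- exp (- lam * t))) in Ij.
  assert (Ifj : is_RInt (fun r => exp (- lam * r) * rate_sum (sc a) (U (t - r))) 0 t
                  (- exp (- lam * t) * - RInt j 0 t)).
  { eapply is_RInt_ext; [|exact Ij]. intros r _. unfold j, weighted_jumps, scal; simpl.
    unfold mult; simpl. fold lam. replace (-1 * r + t) with (t - r) by ring.
    replace (exp (lam * (t - r))) with (exp (lam * t) * exp (- lam * r))
      by (rewrite <- exp_plus; f_equal; ring).
    replace (exp (- lam * t)) with (/ exp (lam * t))
      by (rewrite <- exp_Ropp; f_equal; ring).
    field. apply Rgt_not_eq, exp_pos. }
  unfold first_jump. fold lam. rewrite (is_RInt_unique _ _ _ _ Ifj). ring.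
Qed.

Lemma first_jump_continuous U : cont_in_time U -> cont_in_time (first_jump sc U).
Proof.
  intros CU a t0.
  apply (continuous_ext_loc _
           (fun t => exp (- exit_rate sc a * t) * RInt (weighted_jumps sc U a) 0 t)).
  { apply filter_forall. intro t. symmetry. apply first_jump_alt, CU. }
  apply (continuous_mult (fun t => exp (- exit_rate sc a * t))); [apply continuous_exp_scal|].
  apply (continuous_RInt_1 (weighted_jumps sc U a) 0 t0).
  apply filter_forall. intro z. apply is_RInt_weighted_jumps, CU.
Qed.

(* Duhamel's formula: this defect is constant along solutions of [V' + lam V = rate_sum U]
   and nondecreasing along supersolutions. *)
Definition duhamel_defect (V : R -> R) (U : R -> tree -> R) (a : tree) (x : R) : R :=
  exp (exit_rate sc a * x) * V x - RInt (weighted_jumps sc U a) 0 x.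

Lemma first_jump_duhamel_defect V U a t : cont_in_time U ->
  V t - (exp (- exit_rate sc a * t) * V 0 + first_jump sc U t a)
  = exp (- exit_rate sc a * t) * (duhamel_defect V U a t - duhamel_defect V U a 0).
Proof.
  intro CU. rewrite first_jump_alt by exact CU. unfold duhamel_defect.
  rewrite RInt_point, Rmult_0_r, exp_0.
  assert (E : exp (- exit_rate sc a * t) * exp (exit_rate sc a * t) = 1).
  { rewrite <- exp_plus. replace (_ + _) with 0 by ring. apply exp_0. }
  change (zero : R) with 0.
  transitivity (exp (- exit_rate sc a * t) * exp (exit_rate sc a * t) * V t
                - exp (- exit_rate sc a * t) * (V 0 + RInt (weighted_jumps sc U a) 0 t));
    [rewrite E|]; ring.
Qed.

Lemma duhamel_defect_continuous V U a x : cont_in_time U -> (forall x, continuous V x) ->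
  continuous (duhamel_defect V U a) x.
Proof.
  intros CU CV.
  apply (continuous_minus (fun x => exp (exit_rate sc a * x) * V x)).
  - apply (continuous_mult (fun x => exp (exit_rate sc a * x)));
      [apply continuous_exp_scal|apply CV].
  - apply (continuous_RInt_1 (weighted_jumps sc U a) 0 x).
    apply filter_forall. intro z. apply is_RInt_weighted_jumps, CU.
Qed.

Lemma is_derive_duhamel_defect V dV U a x : cont_in_time U -> is_derive V x (dV x) ->
  is_derive (duhamel_defect V U a) x
    (exp (exit_rate sc a * x) * (dV x + exit_rate sc a * V x - rate_sum (sc a) (U x))).
Proof.
  intros CU DV. eapply is_derive_replace.
  - apply (is_derive_minus (fun x => exp (exit_rate sc a * x) * V x)).
    + apply (is_derive_Rmult (fun x => exp (exit_rate sc a * x))); [|exact DV].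
      auto_derive; [exact I|reflexivity].
    + apply (is_derive_RInt (weighted_jumps sc U a) _ 0).
      * apply filter_forall. intro z. apply is_RInt_weighted_jumps, CU.
      * apply weighted_jumps_continuous, CU.
  - unfold minus, plus, opp, weighted_jumps; simpl. ring.
Qed.

Lemma first_jump_supersolution V dV U a t : 0 <= t -> cont_in_time U ->
  (forall x, continuous V x) -> (forall x, 0 < x -> is_derive V x (dV x)) ->
  (forall x, 0 < x -> rate_sum (sc a) (U x) <= dV x + exit_rate sc a * V x) ->
  exp (- exit_rate sc a * t) * V 0 + first_jump sc U t a <= V t.
Proof.
  intros Ht CU CV DV Super.
  assert (Mono : duhamel_defect V U a 0 <= duhamel_defect V U a t).
  { apply (le_of_derive_nonneg _ (fun x => exp (exit_rate sc a * x)
             * (dV x + exit_rate sc a * V x - rate_sum (sc a) (U x)))); [exact Ht| |].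
    - intros x _. apply duhamel_defect_continuous; assumption.
    - intros x Hx. split; [apply is_derive_duhamel_defect, DV; [exact CU|lra]|].
      apply Rmult_le_pos; [apply Rlt_le, exp_pos|]. specialize (Super x ltac:(lra)). lra. }
  pose proof (first_jump_duhamel_defect V U a t CU) as E.
  pose proof (exp_pos (- exit_rate sc a * t)). nra.
Qed.

Lemma first_jump_solution V dV U a t : 0 <= t -> cont_in_time U ->
  (forall x, continuous V x) -> (forall x, 0 < x -> is_derive V x (dV x)) ->
  (forall x, 0 < x -> rate_sum (sc a) (U x) = dV x + exit_rate sc a * V x) ->
  V t = exp (- exit_rate sc a * t) * V 0 + first_jump sc U t a.
Proof.
  intros Ht CU CV DV Sol.
  destruct (MVT_gen (duhamel_defect V U a) 0 t (fun _ => 0)) as [c [_ Const]]; cbv zeta in *.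
  - rewrite Rmin_left, Rmax_right by lra. intros x Hx.
    eapply is_derive_replace; [apply is_derive_duhamel_defect, DV; [exact CU|lra]|].
    rewrite (Sol x ltac:(lra)). ring.
  - intros x _. apply continuity_pt_filterlim, duhamel_defect_continuous; assumption.
  - pose proof (first_jump_duhamel_defect V U a t CU) as E.
    rewrite Const, Rmult_0_l, Rmult_0_r in E. lra.
Qed.

End FirstJump.

(** * Non-explosion: convergence of the Picard iterates *)

Section NonExplosion.
Variable sc : tree -> list (R * tree).
Variables (N : tree -> R) (c d : R).
Hypothesis rates_nonneg : forall a, List.Forall (fun p => 0 <= fst p) (sc a).
Hypothesis weight_step : forall a, List.Forall (fun p => N (snd p) <= N a + d) (sc a).
Hypothesis exit_rate_le : forall a, exit_rate sc a <= c * N a.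
Hypotheses (N_nonneg : forall a, 0 <= N a) (c_nonneg : 0 <= c) (d_nonneg : 0 <= d).

Definition lyapunov (x : R) (b : tree) : R := 2 * N b * exp (c * (d + 1) * x).

Lemma lyapunov_cont : cont_in_time lyapunov.
Proof.
  intros b x. apply (continuous_mult (fun _ => 2 * N b)); [apply continuous_const|].
  apply continuous_exp_scal.
Qed.

Lemma one_plus_lyapunov_cont : cont_in_time (fun x b => 1 + lyapunov x b).
Proof.
  intros b x. apply (continuous_plus (fun _ => 1) (fun x => lyapunov x b));
    [apply continuous_const|apply lyapunov_cont].
Qed.

Lemma lyapunov_nonneg x b : 0 <= lyapunov x b.
Proof. unfold lyapunov. pose proof (N_nonneg b). pose proof (exp_pos (c * (d + 1) * x)). nra. Qed.

Lemma first_jump_lyapunov t a : 0 <= t ->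
  first_jump sc (fun x b => 1 + lyapunov x b) t a <= lyapunov t a.
Proof.
  intro Ht. set (beta := c * (d + 1)).
  eapply Rle_trans;
    [|apply (first_jump_supersolution sc (fun x => lyapunov x a) (fun x => beta * lyapunov x a)
                (fun x b => 1 + lyapunov x b) a t);
        [exact Ht|apply one_plus_lyapunov_cont| | |]].
  - cbv beta. pose proof (lyapunov_nonneg 0 a). pose proof (exp_pos (- exit_rate sc a * t)). nra.
  - intro x. apply lyapunov_cont.
  - intros x _. unfold lyapunov. auto_derive; [exact I|]. fold beta. ring.
  - intros x Hx. set (e := exp (beta * x)).
    assert (He : 1 <= e).
    { pose proof (exp_ineq1_le (beta * x)).
      assert (0 <= beta * x) by (unfold beta; repeat apply Rmult_le_pos; lra).
      unfold e. lra. }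
    assert (Hlam : 0 <= exit_rate sc a).
    { unfold exit_rate. rewrite <- (Rmult_0_l (rate_sum (sc a) (fun _ => 1))), <- rate_sum_const.
      apply rate_sum_le_pointwise; [apply rates_nonneg|]. intros; lra. }
    apply Rle_trans with (rate_sum (sc a) (fun _ => 1 + 2 * (N a + d) * e)).
    + apply rate_sum_le.
      eapply Forall_impl; [|apply Forall_and; [apply rates_nonneg|apply weight_step]].
      intros p [Hq HN]. split; [exact Hq|]. unfold lyapunov. fold beta e. nra.
    + rewrite rate_sum_const. fold (exit_rate sc a). unfold lyapunov. fold beta e.
      specialize (exit_rate_le a). pose proof (N_nonneg a).
      assert (0 <= (c * N a - exit_rate sc a) * (2 * e * (d + 1))) by (apply Rmult_le_pos; nra).
      unfold beta. nra.
Qed.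

Section Picard.
Variables (f : tree -> R) (G : R -> tree -> R) (T : nat -> R -> tree -> R).
Hypothesis G_cont : cont_in_time G.
Hypothesis G_unit : forall x b, 0 <= x -> 0 <= G x b <= 1.
Hypothesis G_eq : forall t a, 0 <= t ->
  G t a = exp (- exit_rate sc a * t) * f a + first_jump sc G t a.
Hypothesis T_0 : forall t a, T O t a = exp (- exit_rate sc a * t) * f a.
Hypothesis T_S : forall n t a,
  T (S n) t a = exp (- exit_rate sc a * t) * f a + first_jump sc (T n) t a.

Lemma picard_cont n : cont_in_time (T n).
Proof.
  induction n as [|n IH]; intros b x.
  - apply (continuous_ext_loc _ (fun t => exp (- exit_rate sc b * t) * f b)).
    { apply filter_forall. intro t. symmetry. apply T_0. }
    apply (continuous_mult (fun t => exp (- exit_rate sc b * t))); [apply continuous_exp_scal|].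
    apply continuous_const.
  - apply (continuous_ext_loc _
             (fun t => exp (- exit_rate sc b * t) * f b + first_jump sc (T n) t b)).
    { apply filter_forall. intro t. symmetry. apply T_S. }
    apply (continuous_plus (fun t => exp (- exit_rate sc b * t) * f b)).
    + apply (continuous_mult (fun t => exp (- exit_rate sc b * t))); [apply continuous_exp_scal|].
      apply continuous_const.
    + apply first_jump_continuous, IH.
Qed.

Lemma gap_cont n : cont_in_time (fun x b => G x b - T n x b).
Proof.
  intros b x. apply (continuous_minus (fun x => G x b) (fun x => T n x b)).
  - apply G_cont.
  - apply picard_cont.
Qed.

Lemma gap_0 t a : 0 <= t -> G t a - T O t a = first_jump sc G t a.
Proof. intro Ht. rewrite (G_eq t a Ht), T_0. ring. Qed.

Lemma gap_S n t a : 0 <= t ->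
  G t a - T (S n) t a = first_jump sc (fun x b => G x b - T n x b) t a.
Proof.
  intro Ht. rewrite first_jump_minus by (apply G_cont || apply picard_cont).
  rewrite (G_eq t a Ht), T_S. ring.
Qed.

Lemma gap_nonneg n t a : 0 <= t -> 0 <= G t a - T n t a.
Proof.
  revert t a. induction n as [|n IH]; intros t a Ht.
  - rewrite gap_0 by exact Ht.
    apply first_jump_nonneg; [exact rates_nonneg|exact Ht|exact G_cont|].
    intros x Hx b. apply G_unit. lra.
  - rewrite gap_S by exact Ht.
    apply first_jump_nonneg; [exact rates_nonneg|exact Ht|apply gap_cont|].
    intros x Hx b. apply IH. lra.
Qed.

Lemma gap_nonincreasing n t a : 0 <= t -> G t a - T (S n) t a <= G t a - T n t a.
Proof.
  revert t a. induction n as [|n IH]; intros t a Ht.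
  - rewrite gap_S, gap_0 by exact Ht.
    apply first_jump_le; [exact rates_nonneg|exact Ht|apply gap_cont|exact G_cont|].
    intros x _ b. rewrite T_0.
    assert (f b = G 0 b)
      by (rewrite (G_eq 0 b (Rle_refl 0)), first_jump_at0, Rmult_0_r, exp_0; ring).
    pose proof (G_unit 0 b (Rle_refl 0)). pose proof (exp_pos (- exit_rate sc b * x)). nra.
  - rewrite !(gap_S _ t a Ht).
    apply first_jump_le; [exact rates_nonneg|exact Ht|apply gap_cont|apply gap_cont|].
    intros x Hx b. apply IH. lra.
Qed.

Lemma gap_sums_cont n : cont_in_time (fun x b => sum_f_R0 (fun k => G x b - T k x b) n).
Proof.
  induction n as [|n IH]; intros b x; [apply gap_cont|].
  apply (continuous_plus (fun x => sum_f_R0 (fun k => G x b - T k x b) n)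
                         (fun x => G x b - T (S n) x b)); [apply IH|apply gap_cont].
Qed.

Lemma gap_sums_S n t a : 0 <= t ->
  sum_f_R0 (fun k => G t a - T k t a) (S n)
  = first_jump sc (fun x b => G x b + sum_f_R0 (fun k => G x b - T k x b) n) t a.
Proof.
  revert t a. induction n as [|n IH]; intros t a Ht.
  - simpl. rewrite gap_0, gap_S by exact Ht.
    rewrite <- first_jump_plus by (apply G_cont || apply gap_cont). reflexivity.
  - change (sum_f_R0 (fun k => G t a - T k t a) (S (S n)))
      with (sum_f_R0 (fun k => G t a - T k t a) (S n) + (G t a - T (S (S n)) t a)).
    rewrite IH, gap_S by exact Ht.
    rewrite <- first_jump_plus.
    + apply first_jump_ext; [exact Ht|]. intros x _ b. simpl. ring.
    + intros b x. apply (continuous_plus (fun x => G x b)); [apply G_cont|apply gap_sums_cont].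
    + apply gap_cont.
Qed.

Lemma gap_partial_sums_le n t a : 0 <= t ->
  sum_f_R0 (fun k => G t a - T k t a) n <= lyapunov t a.
Proof.
  revert t a. induction n as [|n IH]; intros t a Ht;
    eapply Rle_trans; try apply (first_jump_lyapunov t a Ht).
  - simpl. rewrite gap_0 by exact Ht.
    apply first_jump_le;
      [exact rates_nonneg|exact Ht|exact G_cont|apply one_plus_lyapunov_cont|].
    intros x Hx b. pose proof (G_unit x b (proj1 Hx)). pose proof (lyapunov_nonneg x b). lra.
  - rewrite gap_sums_S by exact Ht.
    apply first_jump_le; [exact rates_nonneg|exact Ht| |apply one_plus_lyapunov_cont|].
    + intros b x. apply (continuous_plus (fun x => G x b)); [apply G_cont|apply gap_sums_cont].
    + intros x Hx b. pose proof (G_unit x b (proj1 Hx)). specialize (IH x b (proj1 Hx)). lra.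
Qed.

Theorem picard_converges t a : 0 <= t -> is_lim_seq (fun n => T n t a) (G t a).
Proof.
  intro Ht.
  assert (Gap : is_lim_seq (fun n => G t a - T n t a) 0).
  { apply (is_lim_seq_0_of_bounded_partial_sums _ (lyapunov t a)); intro n.
    - apply gap_nonneg, Ht.
    - apply gap_nonincreasing, Ht.
    - apply gap_partial_sums_le, Ht. }
  apply is_lim_seq_ext with (u := fun n => G t a - (G t a - T n t a)); [intro n; ring|].
  replace (Finite (G t a)) with (Finite (G t a - 0)) by (f_equal; ring).
  apply is_lim_seq_minus'; [apply is_lim_seq_const|exact Gap].
Qed.

End Picard.
End NonExplosion.

(** * Duality *)

Section Duality.
Variables s g u nu0 nu1 : R.
Hypotheses (Hs : 0 <= s) (Hg : 0 <= g) (Hu : 0 <= u) (H0 : 0 <= nu0) (H1 : 0 <= nu1).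
Variable v : R -> R.
Hypothesis v_cont : forall x, continuous v x.
Hypothesis v_ode : forall x, 0 < x -> is_derive v x (ode_rhs s g u nu0 nu1 (v x)).
Hypothesis v_unit : 0 <= v 0 <= 1.

Lemma H_along_ode_cont : cont_in_time (fun x b => H b (v x)).
Proof. intros b x. apply (continuous_comp v (H b)); [apply v_cont|apply H_continuous]. Qed.

Lemma H_along_ode_integral_equation t a : 0 <= t ->
  H a (v t) = exp (- exit_rate (succ s g u nu0 nu1) a * t) * H a (v 0)
              + first_jump (succ s g u nu0 nu1) (fun x b => H b (v x)) t a.
Proof.
  intro Ht.
  apply (first_jump_solution _ (fun x => H a (v x))
           (fun x => rate_sum (succ s g u nu0 nu1 a) (fun b => H b (v x) - H a (v x))));
    [exact Ht|apply H_along_ode_cont| | |].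
  - intro x. apply (continuous_comp v (H a)); [apply v_cont|apply H_continuous].
  - intros x Hx. apply is_derive_H_along_ode, v_ode, Hx.
  - intros x _. unfold exit_rate. rewrite rate_sum_minus, (rate_sum_const _ (H a (v x))). ring.
Qed.

Theorem H_along_ode_duality t a : 0 <= t ->
  H a (v t) = ASG_expect s g u nu0 nu1 a t (fun b => H b (v 0)).
Proof.
  intro Ht.
  assert (Rates : forall b, List.Forall (fun p => 0 <= fst p) (succ s g u nu0 nu1 b))
    by (intro; apply succ_rates_nonneg; assumption).
  assert (Rate_le : forall b,
            exit_rate (succ s g u nu0 nu1) b <= (s + g + u * nu1 + u * nu0) * nleaves b)
    by (intro; rewrite exit_rate_succ; apply Rle_refl).
  assert (Leaves : forall b, 0 <= nleaves b) by (intro b; pose proof (nleaves_ge1 b); lra).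
  assert (Unit : forall x b, 0 <= x -> 0 <= H b (v x) <= 1).
  { intros x b Hx. apply H_unit_interval.
    apply (ode_solution_unit_interval s g u nu0 nu1); assumption. }
  pose proof (picard_converges _ _ _ _ Rates (succ_nleaves_le s g u nu0 nu1) Rate_le Leaves
                ltac:(nra) ltac:(lra) (fun b => H b (v 0)) (fun x b => H b (v x))
                (fun n => Defs.Tn s g u nu0 nu1 (fun b => H b (v 0)) n) H_along_ode_cont Unit
                H_along_ode_integral_equation (fun _ _ => eq_refl) (fun _ _ _ => eq_refl)
                t a Ht) as Conv.
  unfold ASG_expect. rewrite (is_lim_seq_unique _ _ Conv). reflexivity.
Qed.

End Duality.

Theorem theorem2p11 :
  forall (s g u nu0 nu1 : R),
    0 < s -> 0 <= g -> 0 < u -> 0 <= nu0 -> 0 <= nu1 -> nu0 + nu1 = 1 ->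
  forall (y0 : R), 0 <= y0 <= 1 ->
  forall (y : R -> R),
    y 0 = y0 ->
    filterlim y (at_right 0) (locally y0) ->
    (forall t, 0 < t -> is_derive y t (ode_rhs s g u nu0 nu1 (y t))) ->
  (forall (alpha : tree) (t : R), 0 <= t ->
     H alpha (y t) = ASG_expect s g u nu0 nu1 alpha t (fun b => H b y0))
  /\
  (forall t : R, 0 <= t ->
     y t = ASG_expect s g u nu0 nu1 Leaf t (fun b => H b y0)).
Proof.
  intros s g u nu0 nu1 Hs Hg Hu H0 H1 _ y0 Hy0 y Y0 Right Dy.
  set (v := extend_const y y0).
  assert (Ev : forall t, 0 <= t -> v t = y t) by (intros; apply extend_const_nonneg; assumption).
  assert (V0 : v 0 = y0) by (rewrite Ev by lra; exact Y0).
  assert (Cv : forall x, continuous v x).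
  { apply extend_const_continuous; [exact Right|]. intros x Hx.
    apply (@ex_derive_continuous R_AbsRing R_NormedModule). eexists. apply Dy, Hx. }
  assert (Dv : forall x, 0 < x -> is_derive v x (ode_rhs s g u nu0 nu1 (v x))).
  { intros x Hx. rewrite Ev by lra.
    apply (is_derive_ext_loc y); [apply extend_const_locally, Hx|apply Dy, Hx]. }
  assert (Duality : forall alpha t, 0 <= t ->
            H alpha (y t) = ASG_expect s g u nu0 nu1 alpha t (fun b => H b y0)).
  { intros alpha t Ht. rewrite <- V0, <- (Ev t Ht).
    apply H_along_ode_duality; (lra || assumption). }
  split; [exact Duality|].
  intros t Ht. exact (Duality Leaf t Ht).
Qed.
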